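(* Let $(\mathcal{A},\mathcal{E})$ be a finite, essentially small exact category. Then $\mu_\mathcal{E}:(\mathrm{ind}\mathcal{A},\subset_\mathcal{E})\to(\mathfrak{S}(\mathbb{N}),\lll)$ is a measure, i.e. order-preserving; moreover $X\subsetneq_\mathcal{E}Y$ implies $\mu_\mathcal{E}(X)\lll\mu_\mathcal{E}(Y)$.
   Context: $(\mathcal{A},\mathcal{E})$ is a Quillen exact category; admissible monics are morphisms $i$ with $(i,d)\in\mathcal{E}$ for some $d$. $X\subset_\mathcal{E}Y$ means there is an admissible monic $X\to Y$, and $X\subsetneq_\mathcal{E}Y$ means there is one that is not an isomorphism. The $\mathcal{E}$-length $l_\mathcal{E}(X)$ is the supremum of all $n$ such that there is a chain $0=X_0\to\cdots\to X_n=X$ of admissible monics none of which is an isomorphism; $(\mathcal{A},\mathcal{E})$ is finite if $l_\mathcal{E}(X)<\infty$ for all $X$. $\mathrm{ind}\mathcal{A}$ is the set of isomorphism classes of indecomposable objects, partially ordered by $\subset_\mathcal{E}$. $\mathfrak{S}(\mathbb{N})$ is the set of finite nonempty sequences of natural numbers, totally ordered by: $x\lll y$ iff $x=y$, or $x$ is a proper prefix of $y$, or at the first index $i$ where $x_i\neq y_i$ (both defined) one has $x_i>y_i$ (lexicographic order with the order of $\mathbb{N}$ reversed). For indecomposable $X$, $\mu_\mathcal{E}(X)$ is the $\lll$-maximum of the vectors $(l_\mathcal{E}(X_1),\dots,l_\mathcal{E}(X_n))$ over all chains $X_1\subsetneq_\mathcal{E}X_2\subsetneq_\mathcal{E}\cdots\subsetneq_\mathcal{E}X_n=X$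 ($n\ge1$) with all $X_i$ indecomposable. A measure for a poset is an order-preserving map to a totally ordered set. *)

From HB Require Import structures.
From mathcomp Require Import all_boot all_order all_algebra.
Set Implicit Arguments. Unset Strict Implicit. Unset Printing Implicit Defensive.
Import GRing.Theory.
Local Open Scope ring_scope.

(** Preadditive categories: hom-sets are abelian groups, composition bilinear.
    Objects live in a Type (this is how "essentially small" is rendered). *)
Record PreaddCat := {
  Obj :> Type;
  Hom : Obj -> Obj -> zmodType;
  comp : forall X Y Z : Obj, Hom Y Z -> Hom X Y -> Hom X Z;
  idm : forall X : Obj, Hom X X;
  comp_assoc : forall X Y Z W (h : Hom Z W) (g : Hom Y Z) (f : Hom X Y),
      comp h (comp g f) = comp (comp h g) f;
  comp_id_l : forall X Y (f : Hom X Y), comp (idm Y) f = f;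
  comp_id_r : forall X Y (f : Hom X Y), comp f (idm X) = f;
  comp_addl : forall X Y Z (g g' : Hom Y Z) (f : Hom X Y),
      comp (g + g') f = comp g f + comp g' f;
  comp_addr : forall X Y Z (g : Hom Y Z) (f f' : Hom X Y),
      comp g (f + f') = comp g f + comp g f'
}.
Arguments Hom {p}.
Arguments comp {p X Y Z}.
Arguments idm {p}.

Section Cat.
Variable C : PreaddCat.

Definition is_zero_obj (Z : C) : Prop := idm Z = 0.

Definition is_iso (X Y : C) (f : Hom X Y) : Prop :=
  exists g : Hom Y X, comp g f = idm X /\ comp f g = idm Y.

Definition is_biproduct (X Y S : C) (i1 : Hom X S) (i2 : Hom Y S)
    (p1 : Hom S X) (p2 : Hom S Y) : Prop :=
  [/\ comp p1 i1 = idm X, comp p2 i2 = idm Y, comp p1 i2 = 0, comp p2 i1 = 0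
    & comp i1 p1 + comp i2 p2 = idm S].

Definition additive : Prop :=
  (exists Z : C, is_zero_obj Z) /\
  forall X Y : C, exists (S : C) (i1 : Hom X S) (i2 : Hom Y S)
    (p1 : Hom S X) (p2 : Hom S Y), is_biproduct i1 i2 p1 p2.

Definition is_kernel (A B D : C) (i : Hom A B) (d : Hom B D) : Prop :=
  comp d i = 0 /\
  forall (T : C) (f : Hom T B), comp d f = 0 -> exists! g : Hom T A, comp i g = f.

Definition is_cokernel (A B D : C) (d : Hom B D) (i : Hom A B) : Prop :=
  comp d i = 0 /\
  forall (T : C) (f : Hom B T), comp f i = 0 -> exists! g : Hom D T, comp g d = f.

Definition is_kcpair (A B D : C) (i : Hom A B) (d : Hom B D) : Prop :=
  is_kernel i d /\ is_cokernel d i.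

Definition is_pushout (A B A' B' : C) (i : Hom A B) (f : Hom A A')
    (i' : Hom A' B') (f' : Hom B B') : Prop :=
  comp i' f = comp f' i /\
  forall (T : C) (u : Hom A' T) (v : Hom B T), comp u f = comp v i ->
    exists! w : Hom B' T, comp w i' = u /\ comp w f' = v.

Definition is_pullback (B D D' B' : C) (d : Hom B D) (g : Hom D' D)
    (d' : Hom B' D') (g' : Hom B' B) : Prop :=
  comp d g' = comp g d' /\
  forall (T : C) (u : Hom T D') (v : Hom T B), comp g u = comp d v ->
    exists! w : Hom T B', comp d' w = u /\ comp g' w = v.

End Cat.

Definition pair_class (C : PreaddCat) :=
  forall A B D : C, Hom A B -> Hom B D -> Prop.

Definition adm_monic (C : PreaddCat) (E : pair_class C) (A B : C) (i : Hom A B) :=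
  exists (D : C) (d : Hom B D), E A B D i d.
Definition adm_epic (C : PreaddCat) (E : pair_class C) (B D : C) (d : Hom B D) :=
  exists (A : C) (i : Hom A B), E A B D i d.

(** Quillen exact structure (Buehler's axioms E0-E2, E0op-E2op). *)
Definition is_exact_structure (C : PreaddCat) (E : pair_class C) : Prop :=
      (forall A B D (i : Hom A B) (d : Hom B D), E A B D i d -> is_kcpair i d) /\
      (forall A B D A' B' D' (i : Hom A B) (d : Hom B D) (i' : Hom A' B')
         (d' : Hom B' D') (a : Hom A A') (b : Hom B B') (c : Hom D D'),
         E A B D i d -> is_iso a -> is_iso b -> is_iso c ->
         comp i' a = comp b i -> comp d' b = comp c d -> E A' B' D' i' d') /\
      (forall A : C, adm_monic E (idm A) /\ adm_epic E (idm A)) /\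
      (forall A B D (f : Hom A B) (g : Hom B D),
         (adm_monic E f -> adm_monic E g -> adm_monic E (comp g f)) /\
         (adm_epic E f -> adm_epic E g -> adm_epic E (comp g f))) /\
      (forall A B A' (i : Hom A B) (f : Hom A A'), adm_monic E i ->
         exists (B' : C) (i' : Hom A' B') (f' : Hom B B'),
           is_pushout i f i' f' /\ adm_monic E i') /\
      (forall B D D' (d : Hom B D) (g : Hom D' D), adm_epic E d ->
         exists (B' : C) (d' : Hom B' D') (g' : Hom B' B),
           is_pullback d g d' g' /\ adm_epic E d').

Record ExactCat := {
  ecat :> PreaddCat;
  ecat_additive : additive ecat;
  Ex : pair_class ecat;
  Ex_exact : is_exact_structure Ex
}.

Section Exact.
Variable C : ExactCat.

Definition subE (X Y : C) : Prop := exists i : Hom X Y, adm_monic (@Ex C) i.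
Definition psubE (X Y : C) : Prop :=
  exists i : Hom X Y, adm_monic (@Ex C) i /\ ~ is_iso i.

Definition chain_length (X : C) (n : nat) : Prop :=
  exists Xs : nat -> C,
    [/\ is_zero_obj (Xs 0%N), Xs n = X &
        forall k, (k < n)%N -> psubE (Xs k) (Xs k.+1)].

(** l_E(X) = l : l is the supremum (attained, being a bounded set of naturals
    containing 0-length chains) of the lengths of such chains *)
Definition is_lengthE (X : C) (l : nat) : Prop :=
  chain_length X l /\ forall n, chain_length X n -> (n <= l)%N.

(** (A,E) is finite: l_E(X) < oo for every X *)
Definition finite_exact : Prop :=
  forall X : C, exists N : nat, forall n, chain_length X n -> (n <= N)%N.

Definition indecomposable (X : C) : Prop :=
  ~ is_zero_obj X /\
  forall (Y1 Y2 : C) (i1 : Hom Y1 X) (i2 : Hom Y2 X) (p1 : Hom X Y1)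
    (p2 : Hom X Y2), is_biproduct i1 i2 p1 p2 -> is_zero_obj Y1 \/ is_zero_obj Y2.

(** v = (l_E(X_1), ..., l_E(X_n)) for a chain X_1 <_E ... <_E X_n = X of
    indecomposables, n >= 1 (X_k is Xs k, 1-indexed). *)
Definition mu_candidate (X : C) (v : seq nat) : Prop :=
  exists (n : nat) (Xs : nat -> C),
    [/\ (1 <= n)%N, Xs n = X, size v = n &
        forall k, (1 <= k <= n)%N ->
          [/\ indecomposable (Xs k),
               (k < n)%N -> psubE (Xs k) (Xs k.+1) &
               is_lengthE (Xs k) (nth 0%N v k.-1)]].

End Exact.

Definition lll (x y : seq nat) : Prop :=
  x = y \/
  (exists s : seq nat, s <> [::] /\ y = x ++ s) \/
  (exists i : nat, [/\ (i < size x)%N, (i < size y)%N, take i x = take i y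
                      & (nth 0%N y i < nth 0%N x i)%N]).

Definition is_muE (C : ExactCat) (X : C) (v : seq nat) : Prop :=
  mu_candidate X v /\ forall w, mu_candidate X w -> lll w v.

From Pilot Require Import Defs.
From mathcomp Require Import all_boot all_order all_algebra zify.
From Stdlib Require Import Classical.
Set Implicit Arguments. Unset Strict Implicit. Unset Printing Implicit Defensive.
Import Order.TTheory GRing.Theory.

(* The candidate vectors of an indecomposable X are the length vectors of
   chains X_1 <_E ... <_E X_n = X; since lengths strictly grow along proper
   admissible inclusions, they are strictly increasing sequences ending with
   l_E(X), hence finitely many, and their maximum mu_E(X) exists for the total
   order <<<.  If X <_E Y properly, appending Y to a chain realizing mu_E(X)
   gives the candidate mu_E(X) ++ [l_E(Y)] of Y, which lies strictly above
   mu_E(X); if the admissible monic X -> Y is an isomorphism, Y can replace X at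
   the top of every chain, so every candidate of X is one of Y. *)

Lemma exists_max_in (disp : Order.disp_t) (T : orderType disp)
    (P : T -> Prop) (S : seq T) :
  (exists x, P x) -> (forall x, P x -> x \in S) ->
  exists y, P y /\ forall x, P x -> (x <= y)%O.
Proof.
move=> [x0 Px0] PS.
suff [y [Py ymax]] : exists y, P y /\ forall x, P x -> x \in S -> (x <= y)%O.
  by exists y; split => // x Px; exact: ymax (PS x Px).
have {Px0} : exists2 x, P x & x \in S by exists x0; last exact: PS.
elim: S {PS} => [[x _]|a S IH]; first by rewrite in_nil.
case: (classic (exists2 x, P x & x \in S)) => [/IH [y [Py ymax]] _ | noS]; last first.
  move=> [x Px]; rewrite in_cons => /orP[/eqP xa | xS]; last by case: noS; exists x.
  exists a; split=> [|z Pz]; first by rewrite -xa.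
  by rewrite in_cons => /orP[/eqP -> // | zS]; case: noS; exists z.
have [[Pa ya] | a_not_above] := classic (P a /\ (y < a)%O).
  exists a; split => // x Px; rewrite in_cons => /orP[/eqP -> // | xS].
  exact: le_trans (ymax x Px xS) (ltW ya).
exists y; split => // x Px; rewrite in_cons => /orP[/eqP xa | xS]; last exact: ymax.
by subst x; rewrite leNgt; apply/negP => ya; apply: a_not_above; split.
Qed.

(* <<< is the lexicographic order on sequences for the reversed order of nat. *)
Notation revlexi := (seqlexi nat^d).

Lemma revlexi_cons (a b : nat) (x y : seq nat) :
  (a :: x <= b :: y :> revlexi)%O = (b < a) || (a == b) && (x <= y :> revlexi)%O.
Proof. by rewrite lexi_cons !leEdual !leEnat; case: ltngtP. Qed.

Lemma lllP (x y : seq nat) : lll x y <-> (x <= y :> revlexi)%O.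
Proof.
split.
- case=> [->|[[s [_ ->]]|[i [ix iy tk lt]]]]; first exact: lexx.
    by elim: x => //= a x IH; rewrite revlexi_cons eqxx IH orbT.
  elim: x y i ix iy tk lt => [|a x IH] [|b y] [|i] //=.
    by move=> _ _ _ ba; rewrite revlexi_cons ba.
  by move=> ix iy [-> tk] lt; rewrite revlexi_cons eqxx (IH y i) ?orbT.
- elim: x y => [|a x IH] [|b y] //.
  + by move=> _; left.
  + by move=> _; right; left; exists (b :: y).
  + rewrite revlexi_cons => /orP[ba|/andP[/eqP <- /IH]].
      by right; right; exists 0.
    case=> [->|[[s [s0 ->]]|[i [ix iy tk lt]]]]; first by left.
      by right; left; exists s.
    by right; right; exists i.+1; rewrite /= tk.
Qed.

Lemma revlexi_lt_rcons (x : seq nat) (l : nat) : (x < rcons x l :> revlexi)%O.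
Proof.
rewrite lt_neqAle -cats1; apply/andP; split.
  by apply/eqP => /(congr1 size); rewrite size_cat addn1 => /n_Sn.
by apply/lllP; right; left; exists [:: l].
Qed.

Fixpoint bounded_seqs (N B : nat) : seq (seq nat) :=
  if N is N'.+1 then [::] :: [seq x :: s | x <- iota 0 B, s <- bounded_seqs N' B]
  else [:: [::]].

Lemma bounded_seqsP (N B : nat) (v : seq nat) :
  size v <= N -> all (fun x => x < B) v -> v \in bounded_seqs N B.
Proof.
elim: N v => [|N IH] [|x v] //= v_le /andP[xB vB].
rewrite in_cons; apply/orP; right.
by apply: (allpairs_f (fun x s => x :: s)); [rewrite mem_iota | exact: IH].
Qed.

Lemma ltn_incr_gap (f : nat -> nat) (n : nat) :
  (forall k, k.+1 < n -> f k < f k.+1) ->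
  forall i j, i <= j < n -> f i + (j - i) <= f j.
Proof.
move=> f_incr i; elim=> [|j IH] /andP[].
  by rewrite leqn0 => /eqP -> _; rewrite addn0.
rewrite leq_eqVlt ltnS => /orP[/eqP <- _ | ij jn]; first by rewrite subnn addn0.
have IHj : f i + (j - i) <= f j by apply: IH; rewrite ij ltnW.
have := f_incr j jn; lia.
Qed.

Local Notation Hom := Defs.Hom.
Local Notation comp := Defs.comp.

Section Preadditive.
Variable C : PreaddCat.
Local Open Scope ring_scope.

Lemma comp0l (X Y Z : C) (f : Hom X Y) : comp (0 : Hom Y Z) f = 0.
Proof.
apply: (@addrI _ (comp (0 : Hom Y Z) f)).
by rewrite -comp_addl !addr0.
Qed.

Lemma comp0r (X Y Z : C) (g : Hom Y Z) : comp g (0 : Hom X Y) = 0.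
Proof.
apply: (@addrI _ (comp g (0 : Hom X Y))).
by rewrite -comp_addr !addr0.
Qed.

Lemma hom_from_zero_obj (X Y : C) (f : Hom X Y) : is_zero_obj X -> f = 0.
Proof. by move=> X0; rewrite -(comp_id_r f) X0 comp0r. Qed.

Lemma zero_obj_iso (X Y : C) (f : Hom X Y) :
  is_zero_obj X -> is_iso f -> is_zero_obj Y.
Proof.
by move=> X0 [g [_ fg]]; rewrite /is_zero_obj -fg (hom_from_zero_obj f X0) comp0l.
Qed.

Lemma iso_sym (X Y : C) (f : Hom X Y) : is_iso f -> exists g : Hom Y X, is_iso g.
Proof. by move=> [g [gf fg]]; exists g, f. Qed.

Lemma comp_iso_noniso (A X Y : C) (j : Hom A X) (f : Hom X Y) :
  is_iso f -> ~ is_iso j -> ~ is_iso (comp f j).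
Proof.
move=> [g [gf fg]] nj [h [hfj fjh]]; apply: nj; exists (comp h f); split.
  by rewrite -comp_assoc hfj.
have : comp g (comp (comp (comp f j) h) f) = comp g f by rewrite fjh comp_id_l.
by rewrite !comp_assoc gf comp_id_l -!comp_assoc => ->.
Qed.

End Preadditive.

Section ExactLength.
Variable C : ExactCat.

Lemma iso_adm_monic (X Y : C) (f : Hom X Y) : is_iso f -> adm_monic (@Ex C) f.
Proof.
move=> [g [gf fg]].
have [_ [Ex_iso [Ex_id _]]] := Ex_exact C.
have [[D [d Eidd]] _] := Ex_id X.
exists D, (comp d g).
apply: (Ex_iso _ _ _ _ _ _ _ _ _ _ (idm X) f (idm D) Eidd).
- by exists (idm X); rewrite !comp_id_l.
- by exists g.
- by exists (idm D); rewrite !comp_id_l.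
- by [].
- by rewrite -comp_assoc gf comp_id_r comp_id_l.
Qed.

Lemma psubE_comp_iso (A X Y : C) (f : Hom X Y) :
  psubE A X -> is_iso f -> psubE A Y.
Proof.
move=> [j [adm_j nj]] iso_f; exists (comp f j); split; last exact: comp_iso_noniso.
have [_ [_ [_ [Ex_comp _]]]] := Ex_exact C.
by apply: (proj1 (Ex_comp _ _ _ j f)) => //; apply: iso_adm_monic.
Qed.

Lemma zero_adm_monic (X : C) :
  exists (Z : C) (i : Hom Z X), is_zero_obj Z /\ adm_monic (@Ex C) i.
Proof.
have [Ex_kc [_ [Ex_id _]]] := Ex_exact C.
have [_ [Z [i Eiid]]] := Ex_id X.
have [[i0 i_ker] _] := Ex_kc _ _ _ _ _ Eiid.
rewrite comp_id_l in i0.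
exists Z, i; split; last by exists X, (idm X).
have [g [_ g_uniq]] := i_ker Z i (ltac:(by rewrite comp_id_l)).
rewrite /is_zero_obj -(g_uniq (idm Z) (comp_id_r i)).
by apply: g_uniq; rewrite i0 comp0l.
Qed.

Lemma chain_length_exists (X : C) : exists n, chain_length X n.
Proof.
have [X0 | nX0] := classic (is_zero_obj X).
  by exists 0, (fun _ => X).
have [Z [i [Z0 adm_i]]] := zero_adm_monic X.
exists 1, (fun k => if k == 0 then Z else X); split => // k.
rewrite ltnS leqn0 => /eqP -> /=; exists i; split => // iso_i.
exact/nX0/(zero_obj_iso Z0 iso_i).
Qed.

Lemma chain_length_iso (X Y : C) (f : Hom X Y) n :
  chain_length X n -> is_iso f -> chain_length Y n.
Proof.
move=> [Xs [X0 Xn Xs_incr]] iso_f.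
exists (fun k => if k == n then Y else Xs k); split.
- by case: eqP => [n0|_] //; apply: zero_obj_iso iso_f; rewrite -Xn -n0.
- by rewrite eqxx.
move=> k kn; rewrite (ltn_eqF kn).
case: eqP => [kn1|_]; last exact: Xs_incr.
by apply: psubE_comp_iso iso_f; rewrite -Xn -kn1; apply: Xs_incr.
Qed.

Lemma is_lengthE_iso (X Y : C) (f : Hom X Y) l :
  is_lengthE X l -> is_iso f -> is_lengthE Y l.
Proof.
move=> [cl l_max] iso_f; split; first exact: chain_length_iso cl iso_f.
have [g iso_g] := iso_sym iso_f.
by move=> n cn; apply/l_max/(chain_length_iso cn iso_g).
Qed.

Lemma is_lengthE_uniq (X : C) a b : is_lengthE X a -> is_lengthE X b -> a = b.
Proof. by move=> [ca a_max] [cb b_max]; apply/eqP; rewrite eqn_leq a_max ?b_max. Qed.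

Lemma is_lengthE_exists (X : C) : finite_exact C -> exists l, is_lengthE X l.
Proof.
move=> /(_ X) [N N_bound]; have [m cm] := chain_length_exists X.
have [l [cl l_max]] := @exists_max_in _ nat _ (iota 0 N.+1) (ex_intro _ m cm)
  (fun n cn => ltac:(by rewrite mem_iota ltnS N_bound)).
by exists l; split.
Qed.

Lemma is_lengthE_psubE (A B : C) a b :
  is_lengthE A a -> psubE A B -> is_lengthE B b -> a < b.
Proof.
move=> [[Xs [X0 Xa Xs_incr]] _] AB [_ b_max]; apply: b_max.
exists (fun k => if k == a.+1 then B else Xs k); split => // [|k].
  by rewrite eqxx.
rewrite ltnS leq_eqVlt => /orP[/eqP -> | ka]; first by rewrite eqxx (ltn_eqF (ltnSn a)) Xa.
by rewrite (ltn_eqF (ltnW ka : k < a.+1)) (ltn_eqF (ka : k.+1 < a.+1)); apply: Xs_incr.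
Qed.

End ExactLength.

Section MuCandidates.
Variable C : ExactCat.

Lemma mu_candidate_singleton (X : C) l :
  indecomposable X -> is_lengthE X l -> mu_candidate X [:: l].
Proof.
move=> indX lX; exists 1, (fun _ => X); split => // k.
by rewrite -eqn_leq => /eqP <-.
Qed.

Lemma mu_candidate_bounded (X : C) v L :
  is_lengthE X L -> mu_candidate X v -> v \in bounded_seqs L.+1 L.+1.
Proof.
move=> lX [n [Xs [n_gt0 Xn size_v Xs_cand]]].
pose f k := nth 0 v k.
have f_incr : forall k, k.+1 < n -> f k < f k.+1.
  move=> k kn.
  have [_ Xk_sub lk] := Xs_cand k.+1 (ltac:(apply/andP; lia)).
  have [_ _ lk1] := Xs_cand k.+2 (ltac:(apply/andP; lia)).
  exact: is_lengthE_psubE lk (Xk_sub kn) lk1.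
have f_last : f n.-1 = L.
  have [_ _ ln] := Xs_cand n (ltac:(apply/andP; lia)).
  by rewrite Xn in ln; apply: is_lengthE_uniq ln lX.
have gap := ltn_incr_gap f_incr.
apply: bounded_seqsP.
  by have := gap 0 n.-1 (ltac:(apply/andP; lia)); lia.
apply/(all_nthP 0) => i i_lt.
by have := gap i n.-1 (ltac:(apply/andP; lia)); move: f_last; rewrite /f; lia.
Qed.

Lemma mu_candidate_rcons (X Y : C) v l :
  mu_candidate X v -> psubE X Y -> indecomposable Y -> is_lengthE Y l ->
  mu_candidate Y (rcons v l).
Proof.
move=> [n [Xs [n_gt0 Xn size_v Xs_cand]]] XY indY lY.
exists n.+1, (fun k => if k == n.+1 then Y else Xs k).
split => //; rewrite ?eqxx ?size_rcons ?size_v // => k /andP[k_gt0].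
rewrite leq_eqVlt => /orP[/eqP -> | k_le_n].
  by rewrite eqxx ltnn nth_rcons size_v ltnn eqxx.
have [indXk Xk_sub lXk] := Xs_cand k (ltac:(apply/andP; lia)).
rewrite (ltn_eqF k_le_n) nth_rcons size_v (_ : k.-1 < n); last by lia.
split => // k_lt; case: eqP => [k1_n | k1_neq]; last by apply: Xk_sub; lia.
by case: k1_n => ->; rewrite Xn.
Qed.

Lemma mu_candidate_iso (X Y : C) (f : Hom X Y) v :
  mu_candidate X v -> is_iso f -> indecomposable Y -> mu_candidate Y v.
Proof.
move=> [n [Xs [n_gt0 Xn size_v Xs_cand]]] iso_f indY.
exists n, (fun k => if k == n then Y else Xs k); split; rewrite ?eqxx // => k kn.
have [indXk Xk_sub lXk] := Xs_cand k kn.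
case: eqP => [kn_eq | _].
  subst k; rewrite Xn in lXk; split => //; last exact: is_lengthE_iso lXk iso_f.
  by rewrite ltnn.
split => // k_lt; case: eqP => [k1_n | _]; last exact: Xk_sub.
by apply: psubE_comp_iso iso_f; rewrite -Xn -k1_n; apply: Xk_sub.
Qed.

End MuCandidates.

Section Measure.
Variables (C : ExactCat) (C_finite : finite_exact C).

Lemma is_muE_exists (X : C) : indecomposable X -> exists v, is_muE X v.
Proof.
move=> indX; have [L lX] := is_lengthE_exists X C_finite.
have [v [cand_v v_max]] :=
  @exists_max_in _ revlexi (mu_candidate X) (bounded_seqs L.+1 L.+1)
    (ex_intro _ _ (mu_candidate_singleton indX lX))
    (fun w => mu_candidate_bounded lX).
by exists v; split => // w /v_max /lllP.
Qed.

Lemma is_muE_psubE (X Y : C) vX vY : indecomposable Y ->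
  is_muE X vX -> is_muE Y vY -> psubE X Y -> (vX < vY :> revlexi)%O.
Proof.
move=> indY [cand_vX _] [_ vY_max] XY.
have [l lY] := is_lengthE_exists Y C_finite.
apply: lt_le_trans (revlexi_lt_rcons vX l) _; apply/lllP/vY_max.
exact: mu_candidate_rcons cand_vX XY indY lY.
Qed.

Lemma is_muE_iso (X Y : C) (f : Hom X Y) vX vY :
  indecomposable Y -> is_muE X vX -> is_muE Y vY -> is_iso f -> lll vX vY.
Proof.
move=> indY [cand_vX _] [_ vY_max] iso_f.
exact: vY_max (mu_candidate_iso cand_vX iso_f indY).
Qed.

End Measure.

Theorem lemma7p4 (C : ExactCat) (Hfin : finite_exact C) :
  (forall X : C, indecomposable X -> exists v, is_muE X v) /\
  (forall (X Y : C) (vX vY : seq nat),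
     indecomposable X -> indecomposable Y -> is_muE X vX -> is_muE Y vY ->
     (subE X Y -> lll vX vY) /\
     (psubE X Y -> lll vX vY /\ vX <> vY)).
Proof.
split=> [X|X Y vX vY _ indY muX muY]; first exact: is_muE_exists.
have mu_strict : psubE X Y -> lll vX vY /\ vX <> vY.
  move=> /(is_muE_psubE Hfin indY muX muY).
  by rewrite lt_neqAle => /andP[/eqP vX_neq /lllP].
split=> // [[i adm_i]].
have [iso_i | niso_i] := classic (is_iso i); first exact: is_muE_iso muX muY iso_i.
by case: mu_strict; first by exists i.
Qed.
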